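(* For a causal stable system $P$ on $\mathcal{L}_{2e+}^n$, $\theta(P)\le\theta_e(P)$. Moreover, if $\theta(P)\in[0,\pi/2]$, then $\theta(P)=\theta_e(P)$.
   Context: $\mathcal{L}_2^n$: measurable $u:\mathbb{R}\to\mathbb{R}^n$ with $\|u\|_2^2=\int|u(t)|^2dt<\infty$, inner product $\langle u,v\rangle=\int u(t)^Tv(t)\,dt$; $\mathcal{L}_{2+}=\{u\in\mathcal{L}_2:u(t)=0\ \text{for}\ t<0\}$. For $T\ge0$, $(\Gamma_Tu)(t)=u(t)$ for $t\le T$, $0$ for $t>T$, and $u_T=\Gamma_Tu$; $\mathcal{L}_{2e+}=\{u:u_T\in\mathcal{L}_{2+}\ \forall T\ge0\}$. A system is an operator $P:\mathcal{L}_{2e+}\to\mathcal{L}_{2e+}$ with $P0=0$, $P\ne0$; causal if $\Gamma_TP=\Gamma_TP\Gamma_T$ for all $T\ge0$; a causal system is stable if $Pu\in\mathcal{L}_{2+}$ for all $u\in\mathcal{L}_{2+}$ and $\sup_{0\ne u\in\mathcal{L}_{2+}}\|Pu\|_2/\|u\|_2<\infty$. The singular angle $\theta(P)\in[0,\pi]$ is given by $\cos\theta(P)=\inf\{\langle u,Pu\rangle/(\|u\|_2\|Pu\|_2):0\neq u\in\mathcal{L}_{2+},\ Pu\ne0\}$. The $\mathcal{L}_{2e}$ singular angle $\theta_e(P)\in[0,\pi]$ is given by $\cos\theta_e(P)=\inf\{\langle u_T,(Pu)_T\rangle/(\|u_T\|_2\|(Pu)_T\|_2): u\in\mathcal{L}_{2e+},\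 T>0,\ \|u_T\|_2\ne0,\ \|(Pu)_T\|_2\ne0\}$. *)

From HB Require Import structures.
From mathcomp Require Import all_boot all_order all_algebra.
From mathcomp Require Import all_classical all_reals all_analysis.
Set Implicit Arguments. Unset Strict Implicit. Unset Printing Implicit Defensive.
Import Order.TTheory GRing.Theory Num.Theory.
Import numFieldNormedType.Exports.
Local Open Scope classical_set_scope.
Local Open Scope ring_scope.

Section Signals.
Variables (R : realType) (n : nat).

Definition signal := R -> 'I_n -> R.

Definition dotv (x y : 'I_n -> R) : R := \sum_(i < n) x i * y i.
Definition sqnorm (x : 'I_n -> R) : R := dotv x x.

(* L_2^n : measurable (componentwise, i.e. Borel-measurable into R^n)
   with finite integral of |u(t)|^2. *)
Definition L2 (u : signal) : Prop :=
  (forall i : 'I_n, measurable_fun setT (fun t : R => u t i)) /\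
  (\int[lebesgue_measure]_t (sqnorm (u t))%:E < +oo)%E.

Definition L2p (u : signal) : Prop :=
  L2 u /\ (forall t : R, t < 0 -> u t = (fun _ => 0)).

Definition trunc (T : R) (u : signal) : signal :=
  fun t => if t <= T then u t else (fun _ => 0).

Definition L2ep (u : signal) : Prop :=
  forall T : R, 0 <= T -> L2p (trunc T u).

Definition inner (u v : signal) : R :=
  Rintegral lebesgue_measure setT (fun t => dotv (u t) (v t)).
Definition norm2 (u : signal) : R :=
  Num.sqrt (Rintegral lebesgue_measure setT (fun t => sqnorm (u t))).

Definition zero_signal : signal := fun _ _ => 0.

Definition is_system (P : signal -> signal) : Prop :=
  (forall u, L2ep u -> L2ep (P u)) /\ P zero_signal = zero_signal /\
  (exists u, L2ep u /\ P u <> zero_signal).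

Definition causal (P : signal -> signal) : Prop :=
  forall T : R, 0 <= T -> forall u, L2ep u ->
    trunc T (P u) = trunc T (P (trunc T u)).

(* stable: maps L2+ into L2+ with finite gain; "0 <> u" is read in L_2,
   i.e. ||u||_2 <> 0. *)
Definition stable (P : signal -> signal) : Prop :=
  (forall u, L2p u -> L2p (P u)) /\
  (exists c : R, forall u, L2p u -> norm2 u != 0 -> norm2 (P u) / norm2 u <= c).

Definition singular_angle (P : signal -> signal) : R :=
  acos (inf [set r | exists u, L2p u /\ norm2 u != 0 /\ norm2 (P u) != 0 /\
                      r = inner u (P u) / (norm2 u * norm2 (P u))]).

Definition singular_angle_e (P : signal -> signal) : R :=
  acos (inf [set r | exists u (T : R), L2ep u /\ 0 < T /\
                      norm2 (trunc T u) != 0 /\ norm2 (trunc T (P u)) != 0 /\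
                      r = inner (trunc T u) (trunc T (P u)) /
                          (norm2 (trunc T u) * norm2 (trunc T (P u)))]).

End Signals.

From HB Require Import structures.
From mathcomp Require Import all_boot all_order all_algebra.
From mathcomp Require Import all_classical all_reals all_analysis.
From mathcomp Require Import ring.
From mathcomp Require Import measurable_realfun.
Import Order.TTheory GRing.Theory Num.Theory.
Import numFieldNormedType.Exports.
Local Open Scope classical_set_scope.
Local Open Scope ring_scope.

(* For an input v supported on (-oo, T], truncating the output at T leaves
   <v, Pv> unchanged and can only decrease ||Pv||; by causality every L2e
   cosine <u_T, (Pu)_T> / (||u_T|| ||(Pu)_T||) is of this form with v = u_T,
   so it dominates the L2 cosine of v whenever the latter is nonnegative.
   Conversely, by dominated convergence, every L2 cosine is the limit of the
   L2e cosines of its truncations at T -> oo.  Hence the infimum of the L2e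
   cosines is at most that of the L2 cosines, with equality when the latter
   is nonnegative, i.e. when theta(P) <= pi/2; acos is decreasing. *)

Section Signals.
Context {R : realType} {n : nat}.
Notation mu := (@lebesgue_measure R).
Implicit Types (x y : 'I_n -> R) (u v : signal R n) (T : R).

Lemma sqnorm_ge0 x : 0 <= sqnorm x.
Proof. by apply: sumr_ge0 => i _; rewrite -expr2 sqr_ge0. Qed.

Lemma dotv0l y : dotv (fun _ => 0) y = 0.
Proof. by apply: big1 => i _; rewrite mul0r. Qed.

Lemma normr_dotv_le x y c : 0 < c ->
  `|2 * dotv x y| <= c * sqnorm x + c^-1 * sqnorm y.
Proof.
move=> c_gt0; have c_neq0 : c != 0 by rewrite gt_eqF.
rewrite ler_norml /sqnorm /dotv !mulr_sumr -big_split /= -sumrN.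
apply/andP; split; rewrite -subr_ge0 -sumrB; apply: sumr_ge0 => i _.
- have -> : 2 * (x i * y i) - - (c * (x i * x i) + c^-1 * (y i * y i))
      = c^-1 * (c * x i + y i) ^+ 2 by field.
  by rewrite mulr_ge0 ?sqr_ge0 // invr_ge0 ltW.
- have -> : c * (x i * x i) + c^-1 * (y i * y i) - 2 * (x i * y i)
      = c^-1 * (c * x i - y i) ^+ 2 by field.
  by rewrite mulr_ge0 ?sqr_ge0 // invr_ge0 ltW.
Qed.

Local Notation Rintegrable f := (mu.-integrable setT (EFin \o f)).

Lemma RintegrableD {f g : R -> R} : Rintegrable f -> Rintegrable g ->
  Rintegrable (fun t => f t + g t).
Proof. exact: integrableD. Qed.

Lemma RintegrableZ k {f : R -> R} : Rintegrable f ->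
  Rintegrable (fun t => k * f t).
Proof. exact: integrableZl. Qed.

Lemma Rintegrable_measurable {f : R -> R} : Rintegrable f ->
  measurable_fun setT f.
Proof. by move=> /(measurable_int mu)/measurable_EFinP. Qed.

Lemma L2E u : L2 u <-> (forall i, measurable_fun setT (fun t => u t i)) /\
  Rintegrable (fun t => sqnorm (u t)).
Proof.
have int_abs : (\int[mu]_t `|(sqnorm (u t))%:E| = \int[mu]_t (sqnorm (u t))%:E)%E.
  by apply: eq_integral => t _; rewrite gee0_abs // lee_fin sqnorm_ge0.
split=> -[mu_ int_u]; split=> //.
  apply/integrableP; split; last by rewrite int_abs.
  apply/measurable_EFinP; apply: measurable_sum => i.
  exact: measurable_funM (mu_ i) (mu_ i).
by move: int_u => /integrableP[_]; rewrite int_abs.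
Qed.

Lemma L2_sqnorm_integrable {u} : L2 u -> Rintegrable (fun t => sqnorm (u t)).
Proof. by case/L2E. Qed.

Lemma L2_dotv_integrable {u v} : L2 u -> L2 v ->
  Rintegrable (fun t => dotv (u t) (v t)).
Proof.
move=> /L2E[mu_ iu] /L2E[mv iv].
apply: (le_integrable measurableT _ _ (RintegrableD iu iv)) => [|t _ /=].
  apply/measurable_EFinP; apply: measurable_sum => i.
  exact: measurable_funM (mu_ i) (mv i).
rewrite lee_fin [X in _ <= X]ger0_norm ?addr_ge0 ?sqnorm_ge0 //.
apply: le_trans (_ : `|dotv (u t) (v t)| <= `|2 * dotv (u t) (v t)|) _.
  by rewrite normrM ler_peMl // normr_nat ler1n.
by have := @normr_dotv_le (u t) (v t) 1 ltr01; rewrite invr1 !mul1r.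
Qed.

Lemma norm2_ge0 u : 0 <= norm2 u.
Proof. exact: sqrtr_ge0. Qed.

Lemma sqr_norm2 u : norm2 u ^+ 2 = \int[mu]_t sqnorm (u t).
Proof. by rewrite sqr_sqrtr // Rintegral_ge0 // => t _; apply: sqnorm_ge0. Qed.

Lemma normr_inner_le u v : L2 u -> L2 v -> 0 < norm2 u -> 0 < norm2 v ->
  `|inner u v| <= norm2 u * norm2 v.
Proof.
move=> uL2 vL2 nu_gt0 nv_gt0.
have iu := L2_sqnorm_integrable uL2; have iv := L2_sqnorm_integrable vL2.
have iuv := L2_dotv_integrable uL2 vL2.
(* [c] balances the two terms: c a^2 = c^-1 b^2 = a b. *)
pose c := norm2 v / norm2 u; have c_gt0 : 0 < c by rewrite divr_gt0.
have : `|\int[mu]_t (2 * dotv (u t) (v t))|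
    <= \int[mu]_t (c * sqnorm (u t) + c^-1 * sqnorm (v t)).
  apply: le_trans (le_normr_Rintegral measurableT (RintegrableZ 2 iuv)) _.
  apply: le_Rintegral => //.
  - exact: integrable_abse (RintegrableZ 2 iuv).
  - exact: RintegrableD (RintegrableZ c iu) (RintegrableZ _ iv).
  - by move=> t _; exact: normr_dotv_le.
rewrite (RintegralD measurableT (RintegrableZ c iu) (RintegrableZ _ iv)).
rewrite !RintegralZl // -!sqr_norm2.
have -> : c * norm2 u ^+ 2 + c^-1 * norm2 v ^+ 2 = 2 * (norm2 u * norm2 v).
  by rewrite /c; field; rewrite !gt_eqF.
by rewrite normrM ger0_norm // ler_pM2l.
Qed.

Definition cosine u v := inner u v / (norm2 u * norm2 v).

Lemma cosine_bounded {u v} : L2 u -> L2 v -> -1 <= cosine u v <= 1.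
Proof.
move=> uL2 vL2; rewrite -ler_norml /cosine.
(* A vanishing norm gives cosine 0, since x / 0 = 0. *)
have [->|nu_neq0] := eqVneq (norm2 u) 0; first by rewrite mul0r invr0 mulr0 normr0.
have [->|nv_neq0] := eqVneq (norm2 v) 0; first by rewrite mulr0 invr0 mulr0 normr0.
have nu_gt0 : 0 < norm2 u by rewrite lt0r nu_neq0 norm2_ge0.
have nv_gt0 : 0 < norm2 v by rewrite lt0r nv_neq0 norm2_ge0.
rewrite normrM normfV [X in _ / X]ger0_norm ?mulr_ge0 ?norm2_ge0 //.
by rewrite ler_pdivrMr ?mulr_gt0 // mul1r normr_inner_le.
Qed.

Lemma trunc_apply T u t i : trunc T u t i = if t <= T then u t i else 0.
Proof. by rewrite /trunc; case: ifP. Qed.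

Lemma sqnorm_trunc T u t :
  sqnorm (trunc T u t) = if t <= T then sqnorm (u t) else 0.
Proof. by rewrite /trunc; case: ifP => // _; exact: dotv0l. Qed.

Lemma inner_trunc T u v : inner (trunc T u) (trunc T v) = inner (trunc T u) v.
Proof.
by apply: eq_Rintegral => t _; rewrite /trunc; case: ifP => // _; rewrite !dotv0l.
Qed.

Lemma inner_truncl T u v :
  inner (trunc T u) v = \int[mu]_t (if t <= T then dotv (u t) (v t) else 0).
Proof.
by apply: eq_Rintegral => t _; rewrite /trunc; case: ifP => // _; rewrite dotv0l.
Qed.

Lemma norm2_trunc T u :
  norm2 (trunc T u) = Num.sqrt (\int[mu]_t (if t <= T then sqnorm (u t) else 0)).
Proof. by congr Num.sqrt; apply: eq_Rintegral => t _; exact: sqnorm_trunc. Qed.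

Lemma measurable_fun_if_le T (h : R -> R) : measurable_fun setT h ->
  measurable_fun setT (fun t : R => if t <= T then h t else 0).
Proof.
move=> mh; apply: measurable_fun_ifT => //.
apply: (@measurable_fun_ler _ _ _ _ idfun (cst T)).
  exact: measurable_id.
exact: measurable_cst.
Qed.

Lemma Rintegrable_if_le T {h : R -> R} : Rintegrable h ->
  Rintegrable (fun t => if t <= T then h t else 0).
Proof.
move=> ih.
apply: (le_integrable measurableT _ _ (integrable_abse ih)) => [|t _ /=].
  apply/measurable_EFinP; apply: measurable_fun_if_le.
  exact: Rintegrable_measurable ih.
by case: ifP => _; rewrite ?normr_id // normr0 lee_fin.
Qed.

Lemma L2_trunc T {u} : L2 u -> L2 (trunc T u).
Proof.
move=> /L2E[mu_ iu]; apply/L2E; split.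
  by move=> i; under eq_fun do rewrite trunc_apply; exact: measurable_fun_if_le.
by under eq_fun do rewrite sqnorm_trunc; exact: Rintegrable_if_le.
Qed.

Lemma L2p_trunc T {u} : L2p u -> L2p (trunc T u).
Proof.
move=> [uL2 u_causal]; split; first exact: L2_trunc.
by move=> t t_lt0; rewrite /trunc; case: ifP => // _; exact: u_causal.
Qed.

Lemma norm2_trunc_le T {u} : L2 u -> norm2 (trunc T u) <= norm2 u.
Proof.
move=> uL2; rewrite ler_wsqrtr // le_Rintegral //.
- exact/L2_sqnorm_integrable/L2_trunc.
- exact: L2_sqnorm_integrable.
- by move=> t _; rewrite sqnorm_trunc; case: ifP => // _; exact: sqnorm_ge0.
Qed.

(* Truncating at [k.+1] rather than [k] keeps the truncation times positive,
   as the L2e angle requires. *)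
Lemma Rintegral_if_le_cvg {h : R -> R} : Rintegrable h ->
  \int[mu]_t (if t <= k.+1%:R then h t else 0) @[k --> \oo] --> \int[mu]_t h t.
Proof.
move=> ih; pose F k t := (if t <= k.+1%:R then h t else 0)%:E.
have F_cvg t : setT t -> F ^~ t @ \oo --> (EFin \o h) t.
  move=> _; apply: cvg_near_cst; apply: filterS (nbhs_infty_ger t) => k t_le_k.
  by rewrite /F ifT // (le_trans t_le_k) // ler_nat.
have F_le k t : setT t -> (`|F k t| <= `|h t|%:E)%E.
  by move=> _; rewrite /F; case: ifP => _ /=; rewrite ?normr0 lee_fin.
have F_meas k : measurable_fun setT (F k).
  apply/measurable_EFinP; apply: measurable_fun_if_le.
  exact: Rintegrable_measurable ih.
have := dominated_cvg (mu := mu) (g := abse \o (EFin \o h)) measurableT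
  F_meas F_cvg (fun _ _ => isT) (integrable_abse ih) F_le.
by rewrite -(fineK (integrable_fin_num measurableT ih)) => /fine_cvg.
Qed.

Lemma norm2_trunc_cvg {u} : L2 u ->
  norm2 (trunc k.+1%:R u) @[k --> \oo] --> norm2 u.
Proof.
move=> uL2; under eq_fun do rewrite norm2_trunc.
exact: continuous_cvg _ (@sqrt_continuous R _)
  (Rintegral_if_le_cvg (L2_sqnorm_integrable uL2)).
Qed.

Lemma inner_trunc_cvg {u v} : L2 u -> L2 v ->
  inner (trunc k.+1%:R u) (trunc k.+1%:R v) @[k --> \oo] --> inner u v.
Proof.
move=> uL2 vL2; under eq_fun do rewrite inner_trunc inner_truncl.
exact: Rintegral_if_le_cvg (L2_dotv_integrable uL2 vL2).
Qed.

Lemma cosine_trunc_cvg {u v} : L2 u -> L2 v -> norm2 u != 0 -> norm2 v != 0 ->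
  cosine (trunc k.+1%:R u) (trunc k.+1%:R v) @[k --> \oo] --> cosine u v.
Proof.
move=> uL2 vL2 nu_neq0 nv_neq0; apply: cvgM; first exact: inner_trunc_cvg.
apply: cvgV; first by rewrite mulf_neq0.
by apply: cvgM; exact: norm2_trunc_cvg.
Qed.

Lemma cosine_le_trunc T u v : L2 v -> norm2 (trunc T v) != 0 ->
  0 <= cosine (trunc T u) v ->
  cosine (trunc T u) v <= cosine (trunc T u) (trunc T v).
Proof.
move=> vL2 nvT_neq0; rewrite /cosine inner_trunc.
have [->|nu_neq0] := eqVneq (norm2 (trunc T u)) 0.
  by rewrite !mul0r invr0 !mulr0.
have nu_gt0 : 0 < norm2 (trunc T u) by rewrite lt0r nu_neq0 norm2_ge0.
have nvT_gt0 : 0 < norm2 (trunc T v) by rewrite lt0r nvT_neq0 norm2_ge0.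
have nv_gt0 := lt_le_trans nvT_gt0 (norm2_trunc_le T vL2).
rewrite pmulr_lge0 ?invr_gt0 ?mulr_gt0 // => inner_ge0.
rewrite ler_wpM2l // lef_pV2 ?posrE ?mulr_gt0 //.
by rewrite ler_wpM2l ?norm2_trunc_le ?norm2_ge0.
Qed.

End Signals.

Section AcosOfInf.
Context {R : realType}.
Implicit Types (x y : R) (S Se : set R).

Lemma lt_acos {x y} : -1 <= x <= 1 -> -1 <= y <= 1 -> x < y -> acos y < acos x.
Proof.
have acos_in (z : R) : -1 <= z <= 1 -> acos z \in `[0, pi].
  by move=> z1; rewrite in_itv /= acos_ge0 ?acos_lepi.
move=> x1 y1; rewrite -(ltr_cos (acos_in _ y1) (acos_in _ x1)).
by rewrite !acosK ?in_itv.
Qed.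

Lemma le_acos {x y} : -1 <= x <= 1 -> -1 <= y <= 1 -> x <= y -> acos y <= acos x.
Proof.
by move=> x1 y1; rewrite le_eqVlt => /predU1P[->//|/(lt_acos x1 y1)/ltW].
Qed.

Lemma inf_bounded {S} : S !=set0 -> (forall r, S r -> -1 <= r <= 1) ->
  -1 <= inf S <= 1.
Proof.
move=> [s Ss] S_bnd; have S_lb : has_lbound S by exists (-1) => r /S_bnd/andP[].
apply/andP; split; first by apply: lb_le_inf; [exists s | move=> r /S_bnd/andP[]].
by apply: le_trans (ge_inf S_lb Ss) _; case/andP: (S_bnd _ Ss).
Qed.

Lemma inf_le_of_approx {S Se} : has_lbound Se -> S !=set0 ->
  (forall s, S s -> forall e, 0 < e -> exists2 r, Se r & r < s + e) ->
  inf Se <= inf S.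
Proof.
move=> Se_lb S_neq0 approx; apply: lb_le_inf S_neq0 _ => s Ss.
apply/ler_addgt0Pr => e e_gt0; have [r Ser r_lt] := approx s Ss e e_gt0.
exact: le_trans (ge_inf Se_lb Ser) (ltW r_lt).
Qed.

Lemma inf_le_of_dominated {S Se} : has_lbound S -> Se !=set0 -> 0 <= inf S ->
  (forall r, Se r -> exists2 s, S s & (0 <= s -> s <= r)) -> inf S <= inf Se.
Proof.
move=> S_lb Se_neq0 inf_ge0 dom; apply: lb_le_inf Se_neq0 _ => r Ser.
have [s Ss s_le] := dom r Ser; have inf_le_s := ge_inf S_lb Ss.
exact: le_trans inf_le_s (s_le (le_trans inf_ge0 inf_le_s)).
Qed.

Lemma acos_inf_le_and_eq S Se :
  (forall s, S s -> -1 <= s <= 1) -> (forall r, Se r -> -1 <= r <= 1) ->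
  (forall s, S s -> forall e, 0 < e -> exists2 r, Se r & r < s + e) ->
  (forall r, Se r -> exists2 s, S s & (0 <= s -> s <= r)) ->
  acos (inf S) <= acos (inf Se) /\
  (acos (inf S) <= pi / 2 -> acos (inf S) = acos (inf Se)).
Proof.
move=> S_bnd Se_bnd approx dom.
have [[s Ss]|S0] := pselect (S !=set0); last first.
  have Se0 : Se = set0.
    by apply/seteqP; split=> // r /dom[s Ss _]; apply: S0; exists s.
  have -> : S = set0 by apply/seteqP; split=> // s Ss; apply: S0; exists s.
  by rewrite Se0.
have S_neq0 : S !=set0 by exists s.
have Se_neq0 : Se !=set0 by have [r Ser _] := approx s Ss 1 ltr01; exists r.
have S1 := inf_bounded S_neq0 S_bnd; have Se1 := inf_bounded Se_neq0 Se_bnd.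
have S_lb : has_lbound S by exists (-1) => r /S_bnd/andP[].
have Se_lb : has_lbound Se by exists (-1) => r /Se_bnd/andP[].
have infSe_le := inf_le_of_approx Se_lb S_neq0 approx.
split=> [|acos_le]; first exact: le_acos.
have inf_ge0 : 0 <= inf S.
  have zero_in : -1 <= (0 : R) <= 1 by rewrite lerN10 ler01.
  rewrite leNgt; apply/negP => /(lt_acos S1 zero_in).
  by rewrite acos0 ltNge acos_le.
by rewrite (@le_anti _ _ (inf S) (inf Se)) // infSe_le inf_le_of_dominated.
Qed.

End AcosOfInf.

Section SingularAngles.
Context {R : realType} {n : nat}.
Variable P : signal R n -> signal R n.

Definition cosines : set R := [set r | exists u, L2p u /\ norm2 u != 0 /\
  norm2 (P u) != 0 /\ r = cosine u (P u)].

Definition cosines_e : set R := [set r | exists u (T : R), L2ep u /\ 0 < T /\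
  norm2 (trunc T u) != 0 /\ norm2 (trunc T (P u)) != 0 /\
  r = cosine (trunc T u) (trunc T (P u))].

Lemma singular_angleE : singular_angle P = acos (inf cosines).
Proof. by []. Qed.

Lemma singular_angle_eE : singular_angle_e P = acos (inf cosines_e).
Proof. by []. Qed.

Lemma cosines_e_bounded : (forall u, L2ep u -> L2ep (P u)) ->
  forall r, cosines_e r -> -1 <= r <= 1.
Proof.
move=> P_L2ep r [u [T [uL2e [/ltW T_ge0 [_ [_ ->]]]]]].
exact: cosine_bounded (uL2e T T_ge0).1 (P_L2ep u uL2e T T_ge0).1.
Qed.

Hypothesis P_L2p : forall u, L2p u -> L2p (P u).

Lemma cosines_bounded r : cosines r -> -1 <= r <= 1.
Proof.
by move=> [u [uL2p [_ [_ ->]]]]; exact: cosine_bounded uL2p.1 (P_L2p u uL2p).1.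
Qed.

Lemma cosines_approx_by_e s : cosines s ->
  forall e, 0 < e -> exists2 r, cosines_e r & r < s + e.
Proof.
move=> [u [uL2p [nu_neq0 [nPu_neq0 ->]]]] e e_gt0.
have uL2 := uL2p.1; have PuL2 := (P_L2p u uL2p).1.
have cos_lt : cosine u (P u) < cosine u (P u) + e by rewrite ltrDl.
near \oo => k.
exists (cosine (trunc k.+1%:R u) (trunc k.+1%:R (P u))).
  exists u, k.+1%:R; split; first by move=> T _; apply: L2p_trunc.
  split=> //; split.
    by near: k; exact: cvgr_neq0 (norm2_trunc_cvg uL2) nu_neq0.
  by split=> //; near: k; exact: cvgr_neq0 (norm2_trunc_cvg PuL2) nPu_neq0.
by near: k; exact: cvgr_lt (cosine_trunc_cvg uL2 PuL2 nu_neq0 nPu_neq0) _ cos_lt.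
Unshelve. all: end_near. Qed.

Lemma cosines_e_dominated : causal P ->
  forall r, cosines_e r -> exists2 s, cosines s & (0 <= s -> s <= r).
Proof.
move=> P_causal r [u [T [uL2e [/ltW T_ge0 [nuT_neq0 [nPuT_neq0 ->]]]]]].
have uTL2p := uL2e T T_ge0; have PuTL2 := (P_L2p _ uTL2p).1.
rewrite (P_causal T T_ge0 u uL2e) in nPuT_neq0 *.
have nPuT_gt0 : 0 < norm2 (trunc T (P (trunc T u))).
  by rewrite lt0r nPuT_neq0 norm2_ge0.
have nPu_neq0 : norm2 (P (trunc T u)) != 0.
  by rewrite gt_eqF // (lt_le_trans nPuT_gt0) // norm2_trunc_le.
exists (cosine (trunc T u) (P (trunc T u))); first by exists (trunc T u).
exact: cosine_le_trunc.
Qed.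

End SingularAngles.

Theorem proposition9 (R : realType) (n : nat) (P : signal R n -> signal R n) :
  is_system P -> causal P -> stable P ->
  singular_angle P <= singular_angle_e P /\
  (singular_angle P <= pi / 2 -> singular_angle P = singular_angle_e P).
Proof.
move=> [P_L2ep _] P_causal [P_L2p _].
rewrite singular_angleE singular_angle_eE; apply: acos_inf_le_and_eq.
- exact: cosines_bounded.
- exact: cosines_e_bounded.
- exact: cosines_approx_by_e.
- exact: cosines_e_dominated.
Qed.
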